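(* Let $a\in\mathbb{R}$, $\lambda>0$, and let $w$ be any solution of Airy's equation $w''(x)=xw(x)$. Define $$\mathcal{K}(a,\lambda;x,y,z)=\exp\big((\lambda/2)^{1/2}xyz\big)\,w\Big(\frac{\lambda^{1/3}}{2}(x^2+y^2+z^2)+\frac{a}{\lambda^{2/3}}\Big).$$ Then $$H(x)\mathcal{K}(x,y,z)=H(y)\mathcal{K}(x,y,z)=H(z)\mathcal{K}(x,y,z),$$ where $H(x)=-\frac{\partial^2}{\partial x^2}+ax^2+\frac{\lambda}{2}x^4$ acts in the variable $x$, and similarly for $H(y)$, $H(z)$. *)

From Stdlib Require Import Reals.
From Coquelicot Require Import Coquelicot.
Open Scope R_scope.

Definition airy_solution (w : R -> R) : Prop :=
  exists w' : R -> R, forall x : R,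
    is_derive w x (w' x) /\ is_derive w' x (x * w x).

Definition Kfun (w : R -> R) (a lam x y z : R) : R :=
  exp (sqrt (lam / 2) * x * y * z) *
  w (Rpower lam (1/3) / 2 * (x ^ 2 + y ^ 2 + z ^ 2) + a / Rpower lam (2/3)).

Definition Hop (a lam : R) (f : R -> R) (t : R) : R :=
  - Derive (Derive f) t + a * t ^ 2 * f t + lam / 2 * t ^ 4 * f t.

(* Writing [K] as [exp (c x y z) * w (k (x^2 + y^2 + z^2) + b)], the second x-derivative
   produces [w'] only through the symmetric coefficient [4 c k x y z + 2 k], and Airy's
   equation turns [w''] into [(k r + b) w] with [r = x^2 + y^2 + z^2].  With [c^2 = 4 k^3 = lam/2] and [4 k^2 b = a],
   the potential terms [a x^2 + lam/2 x^4] cancel against the x-dependent part, leaving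
   [H(x) K = - exp (c x y z) ((lam/2) (x^2 y^2 + y^2 z^2 + z^2 x^2) w + (4 c k x y z + 2 k) w')],
   which is symmetric in [x, y, z]. *)
From Stdlib Require Import Reals Lra FunctionalExtensionality.
From Coquelicot Require Import Coquelicot.
Open Scope R_scope.

Lemma Derive2_is_derive (f g : R -> R) (x v : R) :
  (forall t, is_derive f t (g t)) -> is_derive g x v -> Derive (Derive f) x = v.
Proof.
  intros df dg.
  replace (Derive f) with g.
  - exact (is_derive_unique g x v dg).
  - apply functional_extensionality; intro t.
    symmetry; exact (is_derive_unique f t _ (df t)).
Qed.

Lemma Kfun_symmetric (w : R -> R) (a lam x y z x' y' z' : R) :
  x * y * z = x' * y' * z' -> x ^ 2 + y ^ 2 + z ^ 2 = x' ^ 2 + y' ^ 2 + z' ^ 2 ->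
  Kfun w a lam x y z = Kfun w a lam x' y' z'.
Proof.
  intros Hp Hr. unfold Kfun.
  replace (sqrt (lam / 2) * x * y * z) with (sqrt (lam / 2) * (x * y * z)) by ring.
  replace (sqrt (lam / 2) * x' * y' * z') with (sqrt (lam / 2) * (x' * y' * z')) by ring.
  rewrite Hp, Hr. reflexivity.
Qed.

Section AiryKernel.

Variables w w' : R -> R.
Hypothesis airy : forall x, is_derive w x (w' x) /\ is_derive w' x (x * w x).

Lemma Derive2_exp_airy (s k m t : R) :
  Derive (Derive (fun t => exp (s * t) * w (k * t ^ 2 + m))) t =
  exp (s * t) * ((s ^ 2 + 4 * k ^ 2 * t ^ 2 * (k * t ^ 2 + m)) * w (k * t ^ 2 + m)
                 + (4 * s * k * t + 2 * k) * w' (k * t ^ 2 + m)).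
Proof.
  assert (Dw : forall u, ex_derive w u /\ Derive w u = w' u).
  { intro u. split; [eexists | apply is_derive_unique]; apply airy. }
  assert (Dw' : forall u, ex_derive w' u /\ Derive w' u = u * w u).
  { intro u. split; [eexists | apply is_derive_unique]; apply airy. }
  apply Derive2_is_derive with
    (g := fun t => exp (s * t) * (s * w (k * t ^ 2 + m) + 2 * k * t * w' (k * t ^ 2 + m))).
  - intro t'. auto_derive; [apply Dw |].
    replace (t' * (t' * 1)) with (t' ^ 2) by ring.
    rewrite (proj2 (Dw _)). ring.
  - auto_derive; [split; [apply Dw | split; [apply Dw' | exact I]] |].
    replace (t * (t * 1)) with (t ^ 2) by ring.
    rewrite (proj2 (Dw _)), (proj2 (Dw' _)). ring.
Qed.

Variables a lam : R.
Hypothesis lam_pos : 0 < lam.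

Let c := sqrt (lam / 2).
Let k := Rpower lam (1 / 3) / 2.
Let b := a / Rpower lam (2 / 3).

Lemma kernel_rate_sq : c ^ 2 = lam / 2.
Proof. unfold c. apply pow2_sqrt. lra. Qed.

Lemma kernel_scale_sq : 4 * k ^ 2 = Rpower lam (2 / 3).
Proof.
  unfold k. replace (2 / 3) with (1 / 3 + 1 / 3) by field.
  rewrite Rpower_plus. field.
Qed.

Lemma kernel_scale_cube : 4 * k ^ 3 = lam / 2.
Proof.
  replace (4 * k ^ 3) with (4 * k ^ 2 * k) by ring.
  rewrite kernel_scale_sq. unfold k.
  replace (Rpower lam (2 / 3) * (Rpower lam (1 / 3) / 2)) with (Rpower lam (2 / 3 + 1 / 3) / 2)
    by (rewrite Rpower_plus; field).
  replace (2 / 3 + 1 / 3) with 1 by field.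
  rewrite Rpower_1; lra.
Qed.

Lemma kernel_shift : 4 * k ^ 2 * b = a.
Proof.
  rewrite kernel_scale_sq. unfold b. field.
  apply Rgt_not_eq, exp_pos.
Qed.

Definition Hop_Kfun_value (p r e : R) : R :=
  - exp (c * p) * (lam / 2 * e * w (k * r + b) + (4 * c * k * p + 2 * k) * w' (k * r + b)).

Lemma Hop_Kfun_first (x y z : R) :
  Hop a lam (fun t => Kfun w a lam t y z) x =
  Hop_Kfun_value (x * y * z) (x ^ 2 + y ^ 2 + z ^ 2) (x ^ 2 * y ^ 2 + y ^ 2 * z ^ 2 + z ^ 2 * x ^ 2).
Proof.
  set (m := k * (y ^ 2 + z ^ 2) + b).
  assert (HK : (fun t => Kfun w a lam t y z) = fun t => exp (c * y * z * t) * w (k * t ^ 2 + m)).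
  { apply functional_extensionality; intro t. unfold Kfun, m.
    fold c k b. f_equal; f_equal; ring. }
  assert (Hs : (c * y * z) ^ 2 = lam / 2 * (y ^ 2 * z ^ 2)).
  { rewrite <- kernel_rate_sq. ring. }
  assert (Hq : 4 * k ^ 2 * x ^ 2 * (k * x ^ 2 + m) = lam / 2 * x ^ 2 * (x ^ 2 + y ^ 2 + z ^ 2) + a * x ^ 2).
  { unfold m. rewrite <- kernel_scale_cube, <- kernel_shift. ring. }
  assert (HKx := equal_f HK x); cbv beta in HKx.
  unfold Hop, Hop_Kfun_value. rewrite HK, HKx, Derive2_exp_airy, Hs, Hq.
  replace (k * x ^ 2 + m) with (k * (x ^ 2 + y ^ 2 + z ^ 2) + b) by (unfold m; ring).
  replace (c * (x * y * z)) with (c * y * z * x) by ring.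
  ring.
Qed.

End AiryKernel.

Theorem proposition1 (a lam : R) (w : R -> R) (hlam : 0 < lam)
  (hw : airy_solution w) (x y z : R) :
  Hop a lam (fun t => Kfun w a lam t y z) x = Hop a lam (fun t => Kfun w a lam x t z) y /\
  Hop a lam (fun t => Kfun w a lam x t z) y = Hop a lam (fun t => Kfun w a lam x y t) z.
Proof.
  destruct hw as [w' airy].
  assert (Hy : (fun t => Kfun w a lam x t z) = fun t => Kfun w a lam t x z).
  { apply functional_extensionality; intro t. apply Kfun_symmetric; ring. }
  assert (Hz : (fun t => Kfun w a lam x y t) = fun t => Kfun w a lam t x y).
  { apply functional_extensionality; intro t. apply Kfun_symmetric; ring. }
  rewrite Hy, Hz, !(Hop_Kfun_first w w' airy a lam hlam).
  split; f_equal; ring.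
Qed.
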